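(* Let $G$ be an odd unicyclic graph on $n$ vertices $1,\ldots,n$ and edges $e_1,\ldots,e_n$ with cycle $C$. For an edge $e_k$ and distinct vertices $i,j$: $e_k\notin C$ and $i,j\notin G\setminus e_k[C]$ if and only if $e_k$ is an edge of both $P_{i-i^*}$ and $P_{j-j^*}$. Moreover, for vertices $i,j$ and an edge $e_k$: (a) if $e_k\in C$ and $e_k\in P_{i-j}$, then $d(e_k,i)+d(e_k,j)$ and $d(i,j)$ have different parity; (b) if $e_k\in C$ and $e_k\notin P_{i-j}$, then $d(e_k,i)+d(e_k,j)$ and $d(i,j)$ have the same parity; (c) if $e_k\in P_{i-i^*}\cap P_{j-j^*}$, then $d(e_k,i)+d(e_k,j)$ and $d(i,j)$ have the same parity.
   Context: A unicyclic graph on $n$ vertices is a simple connected graph with $n$ edges; it is odd if its unique cycle $C$ has odd length. $d$ is graph distance; for vertex $j$ and edge $e=\{l,m\}$, $d(e,j):=\min\{d(j,l),d(j,m)\}$. $P_{i-j}$ denotes the shortest path between $i$ and $j$. For a vertex $i$, $i^*$ is the vertex of $C$ closest to $i$ ($i^*=i$ if $i\in C$), and $P_{i-i^*}$ is the unique shortest path from $i$ to $C$. For an edge $e$ not on $C$, $G\setminus e[C]$ is the component of $G\setminus e$ containing $C$; for $e$ on $C$, $G\setminus e[C]:=G\setminus e$. *)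

From mathcomp Require Import all_boot.
Set Implicit Arguments. Unset Strict Implicit. Unset Printing Implicit Defensive.

Section Graphs.
Variables (T : finType) (g : rel T).

Definition simple_graph := symmetric g /\ forall x, ~~ g x x.

Definition connected_graph := forall x y : T, connect g x y.

Definition edges : {set {set T}} := [set [set p.1; p.2] | p : T * T & g p.1 p.2].

Definition is_cycle (c : seq T) := [&& uniq c, cycle g c & 2 < size c].

Definition on_cycle (c : seq T) (l m : T) :=
  [&& l \in c, m \in c & (next c l == m) || (next c m == l)].

Definition walkb (k : nat) (x y : T) :=
  [exists s : k.-tuple T, path g x s && (last x s == y)].

Definition dist (x y : T) : nat := find (fun k => walkb k x y) (iota 0 #|T|).

Definition distE (l m j : T) : nat := minn (dist j l) (dist j m).

Definition on_sp (l m i j : T) :=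
  exists s : seq T, [/\ path g i s, last i s = j, size s = dist i j &
    [set l; m] \in [seq [set p.1; p.2] | p <- zip (i :: s) s]].

Definition is_star (c : seq T) (i v : T) :=
  v \in c /\ forall w, w \in c -> dist i v <= dist i w.

Definition on_path_to_C (c : seq T) (l m i : T) :=
  exists v, is_star c i v /\ on_sp l m i v.

Definition grem (l m : T) : rel T := [rel x y | g x y && ([set x; y] != [set l; m])].

Definition in_compC (c : seq T) (l m x : T) :=
  on_cycle c l m \/ exists2 v, v \in c & connect (grem l m) x v.

End Graphs.

From mathcomp Require Import all_boot.
Set Implicit Arguments. Unset Strict Implicit. Unset Printing Implicit Defensive.

(* Removing an edge e = {l, m} from a unicyclic graph G leaves n - 1 edges, so
   G \ e is a tree as soon as it is connected, and a tree is properly 2-coloured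
   by the parity of the distance to a fixed vertex.
   If e is off the odd cycle C, then C survives in G \ e, which is therefore not
   bipartite, hence disconnected: e is a bridge, and the vertices whose shortest
   path to C crosses e are exactly those cut off from C.
   If e is on C, the rest of C is a path of even length between l and m, so G \ e
   is a spanning tree whose colouring gives l and m the same colour and is proper
   on every other edge of G. Along a shortest path, which repeats no vertex, the
   parity of the length is then the colour difference of its ends, flipped exactly
   when the path crosses e; and a shortest path to the nearer endpoint of e never
   crosses e. This gives (a) and (b).
   For (c), i, j and the nearer endpoint of e all lie in the component of G \ e
   away from C, where the colouring obtained from any edge of C is proper, and
   none of the shortest paths involved crosses e. *)

Section Distance.
Variables (T : finType) (h : rel T).
Implicit Types (x y v w r : T) (s : seq T).

Definition shortest_path x y s := [/\ path h x s, last x s = y & size s = dist h x y].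

Lemma walkbP k x y :
  reflect (exists s, [/\ path h x s, last x s = y & size s = k]) (walkb h k x y).
Proof.
apply: (iffP existsP) => [[s /andP[hs /eqP ls]]|[s [hs ls sz]]].
  by exists s; rewrite size_tuple.
have sz' : size s == k by rewrite sz.
by exists (Tuple sz'); rewrite /= hs ls eqxx.
Qed.

Lemma dist_path_le x s : path h x s -> dist h x (last x s) <= size s.
Proof.
move=> hs; have [small|] := ltnP (size s) #|T|; last first.
  by apply: leq_trans; rewrite -[X in _ <= X](size_iota 0) find_size.
rewrite leqNgt; apply/negP => /(before_find 0); rewrite nth_iota // add0n.
by have -> : walkb h (size s) x (last x s) by apply/walkbP; exists s.
Qed.

Lemma exists_shortest_path x y : connect h x y -> exists s, shortest_path x y s.
Proof.
case/connectP=> p hp ->; have [p' hp' up' _] := shortenP hp.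
have sz : size p' < #|T|.
  by have := max_card (mem (x :: p')); rewrite (card_uniqP up').
have has_walk : has (fun k => walkb h k x (last x p')) (iota 0 #|T|).
  by apply/hasP; exists (size p'); [rewrite mem_iota | apply/walkbP; exists p'].
have := nth_find 0 has_walk; rewrite nth_iota ?add0n //.
  by case/walkbP=> s [hs ls sz']; exists s.
by move: has_walk; rewrite has_find size_iota.
Qed.

Lemma dist_adj_le x w y : h x w -> connect h w y -> dist h x y <= (dist h w y).+1.
Proof.
move=> hxw /exists_shortest_path[s [hs <- <-]].
by apply: (dist_path_le (s := w :: s)); rewrite /= hxw.
Qed.

Lemma shortest_path_uniq x y s : shortest_path x y s -> uniq (x :: s).
Proof.
case=> hs ls sz; apply: contraT => not_uniq.
move: ls; case: (shortenP hs) => p' hp' up' sub_p' ls.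
have : #|x :: p'| <= #|x :: s|.
  apply/subset_leq_card/subsetP => z; rewrite !inE => /predU1P[->|/sub_p' ->].
    by rewrite eqxx.
  by rewrite orbT.
rewrite (card_uniqP up') => le_p's.
have : #|x :: s| < size (x :: s).
  by rewrite ltn_neqAle card_size andbT; apply: contra not_uniq => /eqP/card_uniqP.
move/(leq_ltn_trans le_p's); rewrite /= ltnS sz -ls => lt_p'.
by have := dist_path_le hp'; rewrite leqNgt lt_p'.
Qed.

Lemma exists_parent v r : v != r -> connect h v r ->
  exists2 w, h v w & (dist h w r).+1 = dist h v r.
Proof.
move=> vr /exists_shortest_path[[|w s] [/= hs ls sz]]; first by rewrite ls eqxx in vr.
case/andP: hs => hvw hs; exists w => //.
have wr : connect h w r by apply/connectP; exists s.
apply/eqP; rewrite eqn_leq -{1}sz ltnS -ls dist_path_le //= ls.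
by rewrite dist_adj_le.
Qed.

End Distance.

Section Colouring.
Variable T : finType.
Implicit Types (e h : rel T) (col : T -> bool) (a b x y : T) (s : seq T).

Definition proper_colouring e col := forall a b, e a b -> col a != col b.

Lemma path_colour_parity e col x s : proper_colouring e col -> path e x s ->
  col (last x s) = col x (+) odd (size s).
Proof.
move=> col_e; elim: s x => [|y s IHs] x /=; first by rewrite addbF.
case/andP=> /col_e + /IHs ->.
by case: (col x); case: (col y); case: (odd _).
Qed.

Lemma proper_colouring_cycle_even e col s : proper_colouring e col -> cycle e s ->
  ~~ odd (size s).
Proof.
case: s => [|x s] //= col_e /(path_colour_parity col_e).
by rewrite last_rcons size_rcons /=; case: (col x); case: (odd _).
Qed.

Lemma eq_set2_cases a b x y :
  [set a; b] = [set x; y] -> (a = x /\ b = y) \/ (a = y /\ b = x).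
Proof.
move=> eq_ab.
have in_xy z : z \in [set a; b] -> z = x \/ z = y by rewrite eq_ab => /set2P.
have in_ab z : z \in [set x; y] -> z = a \/ z = b by rewrite -eq_ab => /set2P.
have [ea|ea] := in_xy a (set21 a b); have [eb|eb] := in_xy b (set22 a b); subst a b.
- by have [] := in_ab y (set22 x y) => ->; left.
- by left.
- by right.
- by have [] := in_ab x (set21 x y) => ->; left.
Qed.

Lemma mem_edges h x y : h x y -> [set x; y] \in edges h.
Proof. by move=> hxy; apply/imsetP; exists (x, y); rewrite ?inE. Qed.

Lemma tree_dist_colouring h r : (forall v, connect h v r) -> #|edges h| < #|T| ->
  proper_colouring h (fun v => odd (dist h v r)).
Proof.
move=> to_r few_edges.
pose parent v := odflt r [pick w | h v w && ((dist h w r).+1 == dist h v r)].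
have parentP v : v != r -> h v (parent v) /\ (dist h (parent v) r).+1 = dist h v r.
  move=> vr; rewrite /parent; case: pickP => [w /andP[? /eqP]|no_parent] //.
  have [w hvw dw] := exists_parent vr (to_r v).
  by have := no_parent w; rewrite hvw dw eqxx.
pose up_edge v := [set v; parent v].
(* The #|T| - 1 parent edges are distinct, so they exhaust the edges of h. *)
have up_edge_inj : {in [set~ r] &, injective up_edge}.
  move=> v w; rewrite !inE => vr wr /eq_set2_cases[[-> _]//|[ev ew]].
  have [_] := parentP v vr; have [_] := parentP w wr.
  by rewrite -ev ew => <- /eqP; rewrite -addn2 -{2}[dist h v r]addn0 eqn_add2l.
have all_up_edges : up_edge @: [set~ r] = edges h.
  apply/eqP; rewrite eqEcard card_in_imset // cardsC1 -ltnS prednK ?few_edges //.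
    rewrite andbT; apply/subsetP => E /imsetP[v]; rewrite !inE => vr ->.
    by apply: mem_edges; case: (parentP v vr).
  by apply/card_gt0P; exists r.
move=> x y /mem_edges; rewrite -all_up_edges => /imsetP[v]; rewrite !inE => vr.
have [_ dv] := parentP v vr.
by case/eq_set2_cases=> [[-> ->]|[-> ->]]; rewrite -dv /= ?negbK; case: odd.
Qed.

End Colouring.

Section EdgeRemoval.
Variable T : finType.
Implicit Types (g : rel T) (col : T -> bool) (a b l m x y : T) (s : seq T).

Lemma grem_sym g l m : symmetric g -> symmetric (grem g l m).
Proof. by move=> g_sym x y; rewrite /grem /= g_sym setUC. Qed.

Lemma edges_grem g l m : edges (grem g l m) = edges g :\ [set l; m].
Proof.
apply/setP => E; rewrite /edges !inE; apply/imsetP/andP => [[p]|[E_lm /imsetP[p]]].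
  by rewrite inE => /andP[gp E_lm] ->; split; last by apply: mem_edges.
by rewrite inE => gp eE; exists p; rewrite // inE /grem /= gp -eE.
Qed.

Lemma card_edges_grem g l m : g l m -> #|edges (grem g l m)| = #|edges g|.-1.
Proof. by move=> glm; rewrite edges_grem [#|edges g|](cardsD1 [set l; m]) mem_edges. Qed.

Lemma connect_grem g l m x y : symmetric g -> connect (grem g l m) l m ->
  connect g x y -> connect (grem g l m) x y.
Proof.
move=> g_sym lm; apply: connect_sub => a b gab.
have [ab_lm|ab_lm] := eqVneq [set a; b] [set l; m]; last first.
  by apply: connect1; rewrite /grem /= gab ab_lm.
by case/eq_set2_cases: ab_lm => [[-> ->]|[-> ->]]; rewrite // sym_connect_sym //; apply: grem_sym.
Qed.

Lemma grem_colouring g l m : symmetric g -> connected_graph g -> #|edges g| = #|T| ->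
  g l m -> connect (grem g l m) l m ->
  proper_colouring (grem g l m) (fun v => odd (dist (grem g l m) v m)).
Proof.
move=> g_sym g_conn card_g glm lm; apply: tree_dist_colouring.
  by move=> v; apply: connect_grem.
by rewrite card_edges_grem // card_g prednK //; apply/card_gt0P; exists l.
Qed.

Definition uses_edge l m x s := [set l; m] \in [seq [set p.1; p.2] | p <- zip (x :: s) s].

Lemma uses_edge_cons l m x y s :
  uses_edge l m x (y :: s) = ([set l; m] == [set x; y]) || uses_edge l m y s.
Proof. by rewrite /uses_edge /= in_cons. Qed.

Lemma uses_edge_mem l m x s : uses_edge l m x s -> (l \in x :: s) && (m \in x :: s).
Proof.
elim: s x => [|y s IHs] x //; rewrite uses_edge_cons => /orP[/eqP lm_xy|/IHs].
  have sub z : z \in [set l; m] -> z \in [:: x, y & s].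
    by rewrite lm_xy !inE => /orP[]->; rewrite ?orbT.
  by rewrite !sub ?set21 ?set22.
by rewrite !inE => /andP[-> ->]; rewrite !orbT.
Qed.

Lemma path_grem g l m x s : path g x s -> ~~ uses_edge l m x s -> path (grem g l m) x s.
Proof.
elim: s x => [|y s IHs] x //=; rewrite uses_edge_cons negb_or.
by case/andP=> gxy gs /andP[lm_xy not_used]; rewrite IHs // /grem /= gxy eq_sym lm_xy.
Qed.

Lemma uses_edge_split g l m x s : path g x s -> uses_edge l m x s ->
  exists s1 a b s2, [/\ s = s1 ++ b :: s2, [set last x s1; b] = [set l; m],
    path (grem g l m) x s1 & path g b s2].
Proof.
elim: s x => [|y s IHs] x //= /andP[gxy gs]; rewrite uses_edge_cons.
have [lm_xy _|lm_xy /= used] := eqVneq [set l; m] [set x; y].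
  by exists [::], x, y, s.
have [s1 [a [b [s2 [-> ab_lm gs1 gs2]]]]] := IHs _ gs used.
exists (y :: s1), a, b, s2; split => //=.
by rewrite gs1 andbT /grem /= gxy eq_sym lm_xy.
Qed.

Lemma uses_edge_dist_lt g l m x s : path g x s -> uses_edge l m x s ->
  exists2 a, a \in [set l; m] & dist g x a < size s.
Proof.
move=> gs used; have [s1 [_ [b [s2 [es ab_lm gs1 _]]]]] := uses_edge_split gs used.
exists (last x s1); first by rewrite -ab_lm set21.
apply: leq_ltn_trans (dist_path_le (sub_path _ gs1)) _; first by move=> ? ? /andP[].
by rewrite es size_cat /= addnS ltnS leq_addr.
Qed.

Lemma on_spP g l m i j :
  on_sp g l m i j <-> exists2 s, shortest_path g i j s & uses_edge l m i s.
Proof. by split=> [[s [gs ls size_s used]]|[s [gs ls size_s] used]]; exists s. Qed.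

Lemma shortest_path_uses_edge g l m x y s : shortest_path g x y s -> uses_edge l m x s ->
  exists a b, [/\ [set a; b] = [set l; m], connect (grem g l m) x a &
    connect (grem g l m) b y].
Proof.
move=> sp used; have uniq_s := shortest_path_uniq sp; case: sp => gs ls _.
have [s1 [_ [b [s2 [es ab_lm gs1 gs2]]]]] := uses_edge_split gs used.
exists (last x s1), b; split => //; first by apply/connectP; exists s1.
apply/connectP; exists s2; last by rewrite -ls es last_cat.
apply: path_grem gs2 _; apply: contraTN uniq_s => /uses_edge_mem/andP[ls2 ms2].
have : last x s1 \in b :: s2 by move: (set21 (last x s1) b); rewrite ab_lm => /set2P[->|->].
rewrite es -cat_cons cat_uniq => in_s2; apply/negP => /and3P[_ /hasP[]].
by exists (last x s1); last exact: mem_last.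
Qed.

Lemma uniq_path_parity g l m col x s : col l = col m ->
  proper_colouring (grem g l m) col -> uniq (x :: s) -> path g x s ->
  odd (size s) = col x (+) col (last x s) (+) uses_edge l m x s.
Proof.
move=> col_lm col_proper; elim: s x => [|y s IHs] x; first by rewrite /= addbb.
case/andP=> x_notin uniq_s /andP[gxy gs].
rewrite /= uses_edge_cons (IHs _ uniq_s gs).
have [lm_xy|lm_xy] := eqVneq [set l; m] [set x; y]; last first.
  have := col_proper x y; rewrite /grem /= gxy eq_sym lm_xy => /(_ isT).
  by case: (col x); case: (col y); case: (col _); case: (uses_edge _ _ _ _).
have not_used : uses_edge l m y s = false.
  apply: contraNF x_notin => /uses_edge_mem/andP[ls ms].
  by case/eq_set2_cases: lm_xy => [[<- _]|[_ <-]].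
have col_xy : col x = col y by case/eq_set2_cases: lm_xy => [[<- <-]|[<- <-]].
by rewrite not_used col_xy /=; case: (col y); case: (col _).
Qed.

End EdgeRemoval.

Section Unicyclic.
Variables (T : finType) (g : rel T) (c : seq T).
Hypotheses (g_simple : simple_graph g) (g_connected : connected_graph g)
  (card_edges_g : #|edges g| = #|T|) (c_cycle : is_cycle g c) (c_odd : odd (size c)).
Implicit Types (col : T -> bool) (a b l m v x y : T) (s : seq T).

Let g_sym : symmetric g. Proof. by case: g_simple. Qed.
Let c_uniq : uniq c. Proof. by case/and3P: c_cycle. Qed.
Let c_path : cycle g c. Proof. by case/and3P: c_cycle. Qed.
Let c_size : 2 < size c. Proof. by case/and3P: c_cycle. Qed.

Let grem_connect_sym l m : connect_sym (grem g l m).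
Proof. exact/sym_connect_sym/grem_sym. Qed.

Lemma edge_neq l m : g l m -> l != m.
Proof. by apply: contraTneq => ->; case: g_simple. Qed.

Lemma cycle_grem l m : ~~ on_cycle c l m -> cycle (grem g l m) c.
Proof.
move=> off_c; apply: (cycle_from_next c_uniq) => x xc.
rewrite /grem /= (next_cycle c_path xc); apply: contra off_c => /eqP.
by case/eq_set2_cases=> [[<- <-]|[<- <-]]; rewrite /on_cycle xc mem_next xc eqxx ?orbT.
Qed.

Lemma off_cycle_edge_bridge l m : g l m -> ~~ on_cycle c l m -> ~ connect (grem g l m) l m.
Proof.
move=> glm off_c lm.
have col_proper := grem_colouring g_sym g_connected card_edges_g glm lm.
by have := proper_colouring_cycle_even col_proper (cycle_grem off_c); rewrite c_odd.
Qed.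

Lemma off_cycle_connect_grem l m y z : ~~ on_cycle c l m -> y \in c -> z \in c ->
  connect (grem g l m) y z.
Proof.
move=> /cycle_grem; case: c => [|c0 p] //= gp.
have from_c0 w : w \in c0 :: p -> connect (grem g l m) c0 w.
  by move=> wc; apply: (path_connect gp); rewrite -cats1 -cat_cons mem_cat wc.
by move=> /from_c0 c0y /from_c0 c0z; rewrite grem_connect_sym in c0y; apply: connect_trans c0z.
Qed.

Lemma cycle_arc l m : l \in c -> next c l = m ->
  exists s, [/\ path (grem g l m) m s, last m s = l & ~~ odd (size s)].
Proof.
move=> lc next_l; have := rot_index lc; set p := drop _ _ ++ _ => c_rot.
have [uniq_lp path_lp] : uniq (l :: p) /\ cycle g (l :: p).
  by rewrite -c_rot rot_uniq rot_cycle.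
have size_lp : size p = (size c).-1 by rewrite -(size_rot (index l c) c) c_rot.
have next_lp : next (l :: p) l = m by rewrite -c_rot next_rot.
case: p uniq_lp path_lp size_lp next_lp {c_rot} => [|y q].
  by move=> _ _ /= /eqP; rewrite eq_sym -subn1 subn_eq0 leqNgt (ltnW c_size).
rewrite /= eqxx => /and3P[l_notin m_notin _] /andP[_ gq] size_q ey; subst y.
have off_lm : ~~ uses_edge l m m (rcons q l).
  case: q l_notin m_notin size_q {gq} => [|z q] l_notin m_notin size_q.
    by move: c_size; rewrite -(ltn_predK c_size) -size_q.
  rewrite rcons_cons uses_edge_cons negb_or; apply/andP; split.
    by apply: contra l_notin => /eqP/eq_set2_cases[[-> _]|[-> _]]; rewrite !inE eqxx ?orbT.
  apply: contra m_notin => /uses_edge_mem/andP[_]; rewrite -rcons_cons mem_rcons in_cons.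
  by case/orP=> // /eqP ml; rewrite ml in_cons eqxx in l_notin.
exists (rcons q l); split; first exact: path_grem.
  by rewrite last_rcons.
by rewrite size_rcons size_q; case: (size c) c_odd.
Qed.

Lemma on_cycle_colouring l m : g l m -> on_cycle c l m ->
  exists2 col, col l = col m & proper_colouring (grem g l m) col.
Proof.
suff next_case x y : g x y -> x \in c -> next c x = y ->
    exists2 col, col x = col y & proper_colouring (grem g x y) col.
  move=> glm /and3P[lc mc /orP[/eqP|/eqP next_m]]; first exact: next_case.
  have [|col col_ml col_proper] := next_case m l _ mc next_m; first by rewrite g_sym.
  exists col => [|a b /andP[gab ab_lm]]; first by rewrite col_ml.
  by apply: col_proper; rewrite /grem /= gab [[set m; l]]setUC ab_lm.
move=> gxy xc next_x; have [s [gs ls even_s]] := cycle_arc xc next_x.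
have yx : connect (grem g x y) y x by apply/connectP; exists s.
rewrite grem_connect_sym in yx.
have col_proper := grem_colouring g_sym g_connected card_edges_g gxy yx.
exists (fun v => odd (dist (grem g x y) v y)) => //=.
by have := path_colour_parity col_proper gs; rewrite ls (negbTE even_s) addbF.
Qed.

Lemma nearest_endpoint l m v : exists x s, [/\ x \in [set l; m],
  distE g l m v = dist g v x, shortest_path g v x s & ~~ uses_edge l m v s].
Proof.
pose x := if dist g v l <= dist g v m then l else m.
have x_lm : x \in [set l; m] by rewrite /x; case: ifP; rewrite ?set21 ?set22.
have dx : distE g l m v = dist g v x.
  by rewrite /distE /x; case: leqP => [/minn_idPl|/ltnW/minn_idPr].
have [s sp] := exists_shortest_path (g_connected v x); case: (sp) => gs _ size_s.
exists x, s; split => //; apply/negP => /(uses_edge_dist_lt gs)[a a_lm].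
rewrite size_s -dx ltnNge /distE.
by case/set2P: a_lm => ->; rewrite ?geq_minl ?geq_minr.
Qed.

Lemma odd_distE_colour l m col v : col l = col m -> proper_colouring (grem g l m) col ->
  odd (distE g l m v) = col v (+) col l.
Proof.
move=> col_lm col_proper; have [x [s [x_lm -> sp off_lm]]] := nearest_endpoint l m v.
have [gs ls <-] := sp.
rewrite (uniq_path_parity col_lm col_proper (shortest_path_uniq sp) gs) ls (negbTE off_lm).
by case/set2P: x_lm => ->; rewrite ?col_lm addbF.
Qed.

Lemma shortest_path_parity l m col i j s : col l = col m ->
  proper_colouring (grem g l m) col -> shortest_path g i j s ->
  odd (distE g l m i + distE g l m j) (+) odd (dist g i j) = uses_edge l m i s.
Proof.
move=> col_lm col_proper sp; have [gs ls <-] := sp.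
rewrite (uniq_path_parity col_lm col_proper (shortest_path_uniq sp) gs) ls oddD.
rewrite !(odd_distE_colour _ col_lm col_proper).
by case: (col i); case: (col j); case: (col l); case: (uses_edge _ _ _ _).
Qed.

Lemma parity_cycle_edge_on_sp l m i j : g l m -> on_cycle c l m -> on_sp g l m i j ->
  odd (distE g l m i + distE g l m j) != odd (dist g i j).
Proof.
move=> glm lm_c /on_spP[s sp used]; have [col col_lm col_proper] := on_cycle_colouring glm lm_c.
by have := shortest_path_parity col_lm col_proper sp; rewrite used; case: odd; case: odd.
Qed.

Lemma parity_cycle_edge_off_sp l m i j : g l m -> on_cycle c l m -> ~ on_sp g l m i j ->
  odd (distE g l m i + distE g l m j) = odd (dist g i j).
Proof.
move=> glm lm_c off_sp; have [col col_lm col_proper] := on_cycle_colouring glm lm_c.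
have [s sp] := exists_shortest_path (g_connected i j).
have := shortest_path_parity col_lm col_proper sp.
case used: (uses_edge l m i s); first by case: off_sp; apply/on_spP; exists s.
by case: odd; case: odd.
Qed.

Let exists_cycle_vertex : exists v, v \in c.
Proof. by move: c_size; case: c => // v p _; exists v; rewrite mem_head. Qed.

Lemma on_path_to_C_off_cycle l m i : on_path_to_C g c l m i -> ~~ on_cycle c l m.
Proof.
case=> v [[vc v_min] /on_spP[s [gs _ size_s] used]]; apply/negP => /and3P[lc mc _].
have [a a_lm] := uses_edge_dist_lt gs used; rewrite size_s ltnNge v_min //.
by case/set2P: a_lm => ->.
Qed.

Lemma on_path_to_C_split l m i : on_path_to_C g c l m i ->
  exists a b, [/\ [set a; b] = [set l; m], connect (grem g l m) i a &
    exists2 w, w \in c & connect (grem g l m) b w].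
Proof.
case=> v [[vc _] /on_spP[s sp used]].
have [a [b [ab_lm ia bv]]] := shortest_path_uses_edge sp used.
by exists a, b; split => //; exists v.
Qed.

Lemma on_path_to_C_far l m i : g l m -> on_path_to_C g c l m i -> ~ in_compC g c l m i.
Proof.
move=> glm iC; have off_c := on_path_to_C_off_cycle iC.
have [a [b [ab_lm ia [w wc bw]]]] := on_path_to_C_split iC.
case=> [lm_c|[w' w'c iw']]; first by rewrite lm_c in off_c.
apply: (off_cycle_edge_bridge glm off_c).
have ab : connect (grem g l m) a b.
  rewrite grem_connect_sym in ia; rewrite grem_connect_sym in bw.
  apply: connect_trans ia (connect_trans iw' (connect_trans _ bw)).
  exact: off_cycle_connect_grem.
by move: ab; case/eq_set2_cases: ab_lm => [[-> ->]|[-> ->]]; rewrite // grem_connect_sym.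
Qed.

Lemma on_path_to_CP l m i : g l m ->
  (~~ on_cycle c l m /\ ~ in_compC g c l m i) <-> on_path_to_C g c l m i.
Proof.
move=> glm; split=> [[off_c i_far]|iC]; last first.
  by split; [apply: on_path_to_C_off_cycle iC | apply: on_path_to_C_far].
have [c0 c0c] := exists_cycle_vertex.
have [v vc v_min] := @arg_minnP _ c0 (mem c) (fun w => dist g i w) c0c.
exists v; split; first by split.
have [s sp] := exists_shortest_path (g_connected i v).
apply/on_spP; exists s => //; apply: contraT => off_lm; case: sp => gs ls _.
by case: i_far; right; exists v => //; apply/connectP; exists s => //; apply: path_grem.
Qed.

Lemma exists_cycle_colouring : exists l0 m0 col,
  [/\ on_cycle c l0 m0, col l0 = col m0 & proper_colouring (grem g l0 m0) col].
Proof.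
have [c0 c0c] := exists_cycle_vertex.
have c0_next : on_cycle c c0 (next c c0) by rewrite /on_cycle c0c mem_next c0c eqxx.
have [col col_c0 col_proper] := on_cycle_colouring (next_cycle c_path c0c) c0_next.
by exists c0, (next c c0), col.
Qed.

Lemma far_endpoint l m i : on_path_to_C g c l m i -> exists a, forall y x,
  ~ in_compC g c l m y -> x \in [set l; m] -> connect (grem g l m) y x -> x = a.
Proof.
move=> iC; have [a [b [ab_lm _ [w wc bw]]]] := on_path_to_C_split iC.
exists a => y x y_far; rewrite -ab_lm => /set2P[//|->] yb.
by case: y_far; right; exists w => //; apply: connect_trans yb bw.
Qed.

(* a is the endpoint of the bridge {l, m} on the side away from C; col, coming
   from a cycle edge, is proper on that side. *)
Section FarSide.
Variables (l m a l0 m0 : T) (col : T -> bool).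
Hypotheses (glm : g l m)
  (far_to_a : forall y x, ~ in_compC g c l m y -> x \in [set l; m] ->
     connect (grem g l m) y x -> x = a)
  (l0m0_on_c : on_cycle c l0 m0) (col_l0m0 : col l0 = col m0)
  (col_proper : proper_colouring (grem g l0 m0) col).

Lemma far_path_parity y s : ~ in_compC g c l m y -> uniq (y :: s) ->
  path (grem g l m) y s -> odd (size s) = col y (+) col (last y s).
Proof.
move=> y_far uniq_s hs; have gs : path g y s by apply: sub_path hs => ? ? /andP[].
rewrite (uniq_path_parity col_l0m0 col_proper uniq_s gs).
have [used|_] := boolP (uses_edge l0 m0 y s); last by rewrite addbF.
case: y_far; right; exists l0; first by case/and3P: l0m0_on_c.
by apply: (path_connect hs); case/uses_edge_mem/andP: used.
Qed.

Lemma far_odd_distE y : ~ in_compC g c l m y -> odd (distE g l m y) = col y (+) col a.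
Proof.
move=> y_far; have [x [s [x_lm -> sp off_lm]]] := nearest_endpoint l m y.
have [gs ls size_s] := sp; have hs := path_grem gs off_lm.
have yx : connect (grem g l m) y x by apply/connectP; exists s.
rewrite -size_s (far_path_parity y_far (shortest_path_uniq sp) hs) ls.
by rewrite (far_to_a y_far x_lm yx).
Qed.

Lemma far_shortest_path_off_edge i j s : ~ in_compC g c l m i -> ~ in_compC g c l m j ->
  shortest_path g i j s -> ~~ uses_edge l m i s.
Proof.
move=> i_far j_far sp; apply/negP => /(shortest_path_uses_edge sp)[x [y [xy_lm ix yj]]].
have x_lm : x \in [set l; m] by rewrite -xy_lm set21.
have y_lm : y \in [set l; m] by rewrite -xy_lm set22.
rewrite grem_connect_sym in yj; have := edge_neq glm.
by case/eq_set2_cases: xy_lm => [[<- <-]|[<- <-]];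
  rewrite (far_to_a i_far x_lm ix) (far_to_a j_far y_lm yj) eqxx.
Qed.

End FarSide.

Lemma parity_edge_on_paths_to_C l m i j : g l m -> on_path_to_C g c l m i ->
  on_path_to_C g c l m j -> odd (distE g l m i + distE g l m j) = odd (dist g i j).
Proof.
move=> glm iC jC; have [i_far j_far] := (on_path_to_C_far glm iC, on_path_to_C_far glm jC).
have [a far_to_a] := far_endpoint iC.
have [l0 [m0 [col [l0m0_on_c col_l0m0 col_proper]]]] := exists_cycle_colouring.
have [s sp] := exists_shortest_path (g_connected i j); have [gs ls <-] := sp.
have hs := path_grem gs (far_shortest_path_off_edge glm far_to_a i_far j_far sp).
rewrite (far_path_parity l0m0_on_c col_l0m0 col_proper i_far (shortest_path_uniq sp) hs) ls.
rewrite oddD !(far_odd_distE far_to_a l0m0_on_c col_l0m0 col_proper) //.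
by case: (col i); case: (col j); case: (col a).
Qed.

End Unicyclic.

Theorem mainTheorem11 (T : finType) (g : rel T) (c : seq T) :
  simple_graph g -> connected_graph g -> #|edges g| = #|T| ->
  is_cycle g c -> odd (size c) ->
  (forall l m i j : T, g l m -> i != j ->
     ((~~ on_cycle c l m /\ ~ in_compC g c l m i /\ ~ in_compC g c l m j)
      <-> (on_path_to_C g c l m i /\ on_path_to_C g c l m j)))
  /\ (forall l m i j : T, g l m -> on_cycle c l m -> on_sp g l m i j ->
        odd (distE g l m i + distE g l m j) != odd (dist g i j))
  /\ (forall l m i j : T, g l m -> on_cycle c l m -> ~ on_sp g l m i j ->
        odd (distE g l m i + distE g l m j) = odd (dist g i j))
  /\ (forall l m i j : T, g l m -> on_path_to_C g c l m i -> on_path_to_C g c l m j ->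
        odd (distE g l m i + distE g l m j) = odd (dist g i j)).
Proof.
move=> g_simple g_connected card_edges_g c_cycle c_odd.
split; [|split; [|split]] => l m i j glm.
- have path_to_CP := on_path_to_CP g_simple g_connected card_edges_g c_cycle c_odd _ glm.
  move=> _; split=> [[off_c [i_far j_far]]|[/path_to_CP[off_c i_far] /path_to_CP[_ j_far]]] //.
  by split; apply/path_to_CP.
- by apply: parity_cycle_edge_on_sp.
- by apply: parity_cycle_edge_off_sp.
- by apply: parity_edge_on_paths_to_C.
Qed.
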